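(* Let $R$ be a finite local Frobenius ring with a fixed primitive additive character $\psi$. Let $\tau$ be any multiplicative character of $R$ and let $\chi$ be a primitive multiplicative character of $R$. Then $$\sum_{a\in R^\times}\chi(a)\,|K_\tau(a)|^2=\tau(-1)\,J(\chi\tau,\chi\overline{\tau})\,G(\chi)^2.$$
   Context: All rings are finite and commutative with identity; $R^\times$ is the unit group; $M$ is the maximal ideal. An additive character $(R,+)\to\mathbb{C}^*$ is primitive if the only ideal on which it is identically $1$ is $(0)$; $R$ is Frobenius if such a character exists. A multiplicative character is a homomorphism $R^\times\to\mathbb{C}^*$; its conductor is $R$ if it is trivial, and otherwise the largest ideal $I\subseteq M$ such that it is identically $1$ on $1+I$; it is primitive if its conductor is $(0)$. $K_\tau(a)=\sum_{u\in R^\times}\tau(u)\psi(u+au^{-1})$; Gauss sum $G(\chi)=\sum_{u\in R^\times}\psi(u)\chi(u)$; Jacobi sum $J(\chi,\eta)=\sum_{u,v\in R^\times,\,u+v=1}\chi(u)\eta(v)$; $\overline{\tau}$ is the complex conjugate (inverse) character. *)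

From HB Require Import structures.
From mathcomp Require Import all_boot all_order all_algebra all_fingroup all_field.
Set Implicit Arguments. Unset Strict Implicit. Unset Printing Implicit Defensive.
Import Order.TTheory GRing.Theory Num.Theory.
Local Open Scope ring_scope.

Section Defs.
Variable R : finComUnitRingType.

Definition is_ideal (I : {set R}) : Prop :=
  [/\ 0 \in I,
      (forall x y, x \in I -> y \in I -> x - y \in I) &
      (forall r x, x \in I -> r * x \in I)].

(* The set of non-units; in a local ring this is the maximal ideal M. *)
Definition nonunits : {set R} := [set x : R | x \isn't a GRing.unit].

(* R is local: the non-units form an ideal (equivalently, R has a unique
   maximal ideal, namely the set of non-units). *)
Definition local_ring : Prop := is_ideal nonunits.

Definition additive_char (psi : R -> algC) : Prop :=
  psi 0 = 1 /\ forall x y, psi (x + y) = psi x * psi y.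

Definition primitive_additive_char (psi : R -> algC) : Prop :=
  additive_char psi /\
  forall I : {set R}, is_ideal I -> (forall x, x \in I -> psi x = 1) ->
    I = [set 0].

Definition mult_char (chi : {unit R} -> algC) : Prop :=
  chi 1%g = 1 /\ forall u v : {unit R}, chi (u * v)%g = chi u * chi v.

Definition trivial_on_1plus (chi : {unit R} -> algC) (I : {set R}) : Prop :=
  forall u : {unit R}, val u - 1 \in I -> chi u = 1.

(* The conductor is R
   if chi is trivial, and otherwise the largest ideal I contained in M with
   chi trivial on 1 + I; so chi is primitive iff chi is nontrivial and every
   such ideal I is (0). *)
Definition primitive_mult_char (chi : {unit R} -> algC) : Prop :=
  mult_char chi /\ (exists u : {unit R}, chi u <> 1) /\
  forall I : {set R}, is_ideal I -> I \subset nonunits ->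
    trivial_on_1plus chi I -> I = [set 0].

Definition Ksum (psi : R -> algC) (tau : {unit R} -> algC) (a : R) : algC :=
  \sum_(u : {unit R}) tau u * psi (val u + a * val (u^-1)%g).

Definition gauss (psi : R -> algC) (chi : {unit R} -> algC) : algC :=
  \sum_(u : {unit R}) psi (val u) * chi u.

Definition jacobi (chi eta : {unit R} -> algC) : algC :=
  \sum_(u : {unit R}) \sum_(v : {unit R} | val u + val v == 1) chi u * eta v.

Definition mchar_mul (chi eta : {unit R} -> algC) : {unit R} -> algC :=
  fun u => chi u * eta u.

Definition mchar_conj (chi : {unit R} -> algC) : {unit R} -> algC :=
  fun u => (chi u)^*.

Definition unitN1 : {unit R} := FinRing.unit R (@unitrN1 R).

End Defs.

From HB Require Import structures.
From mathcomp Require Import all_boot all_order all_algebra all_fingroup all_field.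
From mathcomp Require Import ring.
Import Order.TTheory GRing.Theory Num.Theory FinRing.Theory.
Set Implicit Arguments.
Unset Strict Implicit.
Unset Printing Implicit Defensive.
Local Open Scope ring_scope.

(* Expanding |K_tau(a)|^2 as a double sum over units u, v and summing against
   chi(a) first produces the twisted Gauss sums sum_a chi(a) psi(a w) with
   w = u^-1 - v^-1.  For primitive chi these equal chi(w)^-1 G(chi) when w is
   a unit and vanish otherwise.  The remaining sum over triples (u, v, w) with
   w = u^-1 - v^-1 is reparametrised by (u, v, w^-1) = (t x, -t y, t x y),
   under which the constraint becomes x + y = 1 and the sum factors as
   tau(-1) J(chi tau, chi tau-bar) G(chi). *)

Lemma conjC_unity_root (z : algC) n : (0 < n)%N -> z ^+ n = 1 -> z^* = z^-1.
Proof.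
move=> n_gt0 zn1; have : `|z| ^+ n == 1 by rewrite -normrX zn1 normr1.
by rewrite pexpr_eq1 // invC_norm => /eqP ->; rewrite expr1n invr1 mul1r.
Qed.

Section CharacterSums.
Variable R : finComUnitRingType.
Local Notation unit_triple := (({unit R} * {unit R}) * {unit R})%type.

Section MultChar.
Variable f : {unit R} -> algC.
Hypothesis fc : mult_char f.

Lemma mult_charX (u : {unit R}) n : f (u ^+ n)%g = f u ^+ n.
Proof.
have [f1 fM] := fc; elim: n => [|n IHn]; first by rewrite expg0 expr0.
by rewrite expgS fM IHn exprS.
Qed.

Lemma mult_charV (u : {unit R}) : f (u^-1)%g = (f u)^-1.
Proof. by have [f1 fM] := fc; apply/esym/mulr1_eq; rewrite -fM mulgV. Qed.

Lemma mult_char_conj (u : {unit R}) : (f u)^* = f (u^-1)%g.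
Proof.
rewrite mult_charV (@conjC_unity_root _ #[u]%g) ?order_gt0 //.
by rewrite -mult_charX expg_order; case: fc.
Qed.

Lemma mult_char_mul_conj (u : {unit R}) : f u * (f u)^* = 1.
Proof. by have [f1 fM] := fc; rewrite mult_char_conj -fM mulgV. Qed.

Lemma mult_char_conjN1 : (f (unitN1 R))^* = f (unitN1 R).
Proof.
by rewrite mult_char_conj; congr f; apply: val_inj; rewrite val_unitV /= invrN1.
Qed.

End MultChar.

Section AdditiveChar.
Variable psi : R -> algC.
Hypothesis psic : additive_char psi.

Lemma additive_charX x n : psi (x *+ n) = psi x ^+ n.
Proof.
have [p0 pD] := psic; elim: n => [|n IHn]; first by rewrite mulr0n expr0.
by rewrite mulrS pD IHn exprS.
Qed.

Lemma additive_charN x : psi (- x) = (psi x)^-1.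
Proof. by have [p0 pD] := psic; apply/esym/mulr1_eq; rewrite -pD subrr. Qed.

Lemma additive_char_conj x : (psi x)^* = psi (- x).
Proof.
rewrite additive_charN (@conjC_unity_root _ #[x]%g) ?order_gt0 //.
by rewrite -additive_charX -zmodXgE expg_order; case: psic.
Qed.

Lemma normKsum2 (tau : {unit R} -> algC) a :
  `|Ksum psi tau a| ^+ 2 =
  \sum_(u : {unit R}) \sum_(v : {unit R}) tau u * (tau v)^* *
    psi (val u - val v) * psi (a * (val (u^-1)%g - val (v^-1)%g)).
Proof.
have [_ pD] := psic.
rewrite normCK /Ksum rmorph_sum mulr_suml; apply: eq_bigr => u _.
rewrite mulr_sumr; apply: eq_bigr => v _; rewrite rmorphM /= additive_char_conj.
by rewrite mulrACA -pD -[RHS]mulrA -pD; congr (_ * psi _); ring.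
Qed.

End AdditiveChar.

Section PrimitiveChar.
Variables (psi : R -> algC) (chi : {unit R} -> algC).
Hypothesis chi_prim : primitive_mult_char chi.

(* The annihilator of a nonzero nonunit x is a nonzero ideal inside the
   nonunits, so by primitivity chi is nontrivial on 1 + ann x, which fixes x. *)
Lemma primitive_mult_char_stab x :
  x \isn't a GRing.unit -> exists u : {unit R}, chi u <> 1 /\ val u * x = x.
Proof.
case: chi_prim => _ [[u0 chi_u0] prim] xNunit.
have [->|x_neq0] := eqVneq x 0; first by exists u0; rewrite mulr0.
pose ann := [set r : R | r * x == 0].
have ann_ideal : is_ideal ann.
  split; first by rewrite inE mul0r.
    by move=> a b; rewrite !inE mulrBl => /eqP -> /eqP ->; rewrite subrr.
  by move=> a b; rewrite !inE -mulrA => /eqP ->; rewrite mulr0.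
have ann_nonunits : ann \subset nonunits R.
  apply/subsetP => r; rewrite !inE => /eqP rx0; apply/negP => r_unit.
  by move: x_neq0; rewrite -(mulKr r_unit x) rx0 mulr0 eqxx.
have [u /andP[u_ann chi_u] | chi_triv] :=
  pickP [pred u : {unit R} | (val u - 1 \in ann) && (chi u != 1)].
  exists u; split; first exact/eqP.
  by move: u_ann; rewrite inE mulrBl mul1r subr_eq0 => /eqP.
have ann0 : ann = [set 0].
  apply: prim => // u u_ann; apply/eqP; move: (chi_triv u) => /=.
  by rewrite u_ann /= => /negbFE.
have mulx_inj : injective (fun r : R => r * x).
  move=> a b /= ab; apply/eqP; rewrite -subr_eq0.
  have : a - b \in ann by rewrite inE mulrBl ab subrr.
  by rewrite ann0 inE.
have [g _ gK] := injF_bij mulx_inj.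
by case/negP: xNunit; apply/unitrPr; exists (g 1); rewrite mulrC gK.
Qed.

Lemma gauss_scale_unit (w : {unit R}) :
  \sum_(a : {unit R}) chi a * psi (val a * val w) = chi (w^-1)%g * gauss psi chi.
Proof.
have [[_ chiM] _] := chi_prim.
rewrite (reindex_inj (mulIg (w^-1)%g)) /gauss mulr_sumr; apply: eq_bigr => a _.
by rewrite chiM /= divrK ?(valP w) //; ring.
Qed.

Lemma gauss_scale_nonunit x :
  x \isn't a GRing.unit -> \sum_(a : {unit R}) chi a * psi (val a * x) = 0.
Proof.
have [[_ chiM] _] := chi_prim.
move=> /primitive_mult_char_stab[u [chi_u ux]]; set S := \sum_a _.
have : S = chi u * S.
  rewrite {1}/S (reindex_inj (mulIg u)) /S mulr_sumr; apply: eq_bigr => a _.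
  by rewrite chiM /= -[_ * _ * x]mulrA (ux : FinRing.uval u * x = x); ring.
move/eqP; rewrite -subr_eq0 -{1}[S]mul1r -mulrBl mulf_eq0 subr_eq0.
by case/predU1P=> [/esym | /eqP].
Qed.

Lemma gauss_scale x :
  \sum_(a : {unit R}) chi a * psi (val a * x) =
  gauss psi chi * \sum_(w : {unit R} | val w == x) chi (w^-1)%g.
Proof.
have [x_unit | xNunit] := boolP (x \is a GRing.unit).
  rewrite -[x]/(val (FinRing.unit R x_unit)) gauss_scale_unit mulrC.
  by rewrite (big_pred1 (FinRing.unit R x_unit)) // => w;
    rewrite /= -(inj_eq val_inj).
rewrite gauss_scale_nonunit // big_pred0 ?mulr0 // => w.
by apply/negbTE; apply: contra xNunit => /eqP <-; exact: valP.
Qed.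

End PrimitiveChar.

Definition jacobi_param (p : unit_triple) : unit_triple :=
  ((p.2 * p.1.1, unitN1 R * p.2 * p.1.2), (p.2 * p.1.1 * p.1.2)^-1)%g.

Lemma jacobi_param_inj : injective jacobi_param.
Proof.
move=> [[x y] t] [[x' y'] t'] E.
have /= e1 := congr1 (fun p => p.1.1) E.
have /= e2 := congr1 (fun p => p.1.2) E.
have /= /invg_inj e3 := congr1 (fun p => p.2) E.
have ey : y = y' by move: e3; rewrite e1 => /mulgI.
have et : t = t' by move: e2; rewrite -!mulgA ey => /mulgI/mulIg.
by move: e1; rewrite et => /mulgI ex; rewrite ex ey.
Qed.

Lemma jacobi_param_constraint p : let q := jacobi_param p in
  (val q.2 == val (q.1.1^-1)%g - val (q.1.2^-1)%g) = (val p.1.1 + val p.1.2 == 1).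
Proof.
case: p => [[x y] t] /=.
set a := FinRing.uval t; set b := FinRing.uval x; set c := FinRing.uval y.
have [ua ub uc] :
    [/\ a \is a GRing.unit, b \is a GRing.unit & c \is a GRing.unit].
  by split; apply: valP.
have uabc : a * b * c \is a GRing.unit by rewrite !unitrM ua ub uc.
rewrite -(inj_eq (mulrI uabc)) !invrM ?unitrM ?unitrN1 ?ua ?ub ?uc // invrN1.
have -> : a * b * c * (c^-1 * (b^-1 * a^-1)) = (a / a) * (b / b) * (c / c) by ring.
have -> : a * b * c * (b^-1 * a^-1 - c^-1 * (a^-1 * -1)) =
    c * (a / a) * (b / b) + b * (a / a) * (c / c) by ring.
by rewrite !divrr // !mulr1 eq_sym addrC.
Qed.

Section KloostermanMoment.
Variables (psi : R -> algC) (tau chi : {unit R} -> algC).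
Hypotheses (psic : additive_char psi) (tauc : mult_char tau)
  (chi_prim : primitive_mult_char chi).

Lemma sum_chi_normKsum2 :
  \sum_(a : {unit R}) chi a * `|Ksum psi tau (val a)| ^+ 2 =
  gauss psi chi *
  \sum_(p : unit_triple | val p.2 == val (p.1.1^-1)%g - val (p.1.2^-1)%g)
    tau p.1.1 * (tau p.1.2)^* * psi (val p.1.1 - val p.1.2) * chi (p.2^-1)%g.
Proof.
transitivity (\sum_(u : {unit R}) \sum_(v : {unit R})
   tau u * (tau v)^* * psi (val u - val v) *
   \sum_(a : {unit R}) chi a * psi (val a * (val (u^-1)%g - val (v^-1)%g))).
  under eq_bigr do rewrite normKsum2 // mulr_sumr.
  rewrite exchange_big; apply: eq_bigr => u _.
  under eq_bigr do rewrite mulr_sumr.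
  rewrite exchange_big.
  by apply: eq_bigr => v _; rewrite mulr_sumr; apply: eq_bigr => a _; ring.
transitivity (gauss psi chi * \sum_(u : {unit R}) \sum_(v : {unit R})
   \sum_(w : {unit R} | val w == val (u^-1)%g - val (v^-1)%g)
     tau u * (tau v)^* * psi (val u - val v) * chi (w^-1)%g).
  rewrite mulr_sumr; apply: eq_bigr => u _.
  rewrite mulr_sumr; apply: eq_bigr => v _.
  rewrite (gauss_scale psi chi_prim) mulrCA !mulr_sumr.
  by apply: eq_bigr => w _; rewrite mulrA.
by rewrite pair_big pair_big_dep.
Qed.

Lemma sum_unit_triples_jacobi :
  \sum_(p : unit_triple | val p.2 == val (p.1.1^-1)%g - val (p.1.2^-1)%g)
    tau p.1.1 * (tau p.1.2)^* * psi (val p.1.1 - val p.1.2) * chi (p.2^-1)%g =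
  tau (unitN1 R) * jacobi (mchar_mul chi tau) (mchar_mul chi (mchar_conj tau))
  * gauss psi chi.
Proof.
have [[_ chiM] _] := chi_prim; have [_ tauM] := tauc.
rewrite (reindex_inj jacobi_param_inj) (eq_bigl _ _ jacobi_param_constraint).
transitivity (\sum_(p : unit_triple | val p.1.1 + val p.1.2 == 1)
  tau (unitN1 R) * (mchar_mul chi tau p.1.1 * mchar_mul chi (mchar_conj tau) p.1.2)
  * (psi (val p.2) * chi p.2)).
  apply: eq_bigr => -[[x y] t] /= /eqP xy1.
  rewrite invgK mulN1r mulNr opprK -mulrDr xy1 mulr1.
  rewrite !tauM !chiM !rmorphM /= (mult_char_conjN1 tauc) /mchar_mul /mchar_conj.
  by rewrite -[RHS]mulr1 -(mult_char_mul_conj tauc t); ring.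
rewrite /jacobi /gauss -mulrA pair_big_dep mulr_suml mulr_sumr.
under [RHS]eq_bigr do rewrite mulr_sumr mulr_sumr.
by rewrite pair_big_dep; apply: eq_big => [p | p _]; rewrite ?andbT ?mulrA.
Qed.

End KloostermanMoment.
End CharacterSums.

Theorem mainTheorem8 (R : finComUnitRingType) (psi : R -> algC)
    (tau chi : {unit R} -> algC) :
  local_ring R ->
  primitive_additive_char psi ->
  mult_char tau ->
  primitive_mult_char chi ->
  \sum_(a : {unit R}) chi a * `|Ksum psi tau (val a)| ^+ 2 =
    tau (unitN1 R) * jacobi (mchar_mul chi tau) (mchar_mul chi (mchar_conj tau))
    * gauss psi chi ^+ 2.
Proof.
move=> _ [psic _] tauc chi_prim.
rewrite (sum_chi_normKsum2 tau psic chi_prim).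
by rewrite (sum_unit_triples_jacobi psi tauc chi_prim) mulrC expr2 mulrA.
Qed.
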